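(* Let $Q=\sum_{i\in I}E_{i,\sigma(i)}\in N_n$ be a subpermutation and let $A=[a_{ij}]\in QU_n$ be a Belitskii canonical form under $B_n$-similarity. Let $i\in I$ and $j\in[n]$. Then $a_{ij}=0$ (i.e. $(i,j)\notin E_A$) in each of the following situations: (1) $i^+<j$ and $j\in S_h$; (2) $j\notin S_t$ and $i<j^-$. In particular, if $i$ and $j$ lie in the same chain of $G_Q$ and $j\neq i^+$, then $a_{ij}=0$.
   Context: $\mathbb F$ is a field; $[n]=\{1,\dots,n\}$. $B_n$ (resp. $U_n$, $N_n$) is the set of $n\times n$ invertible upper triangular (resp. upper triangular with diagonal entries $1$, strictly upper triangular) matrices over $\mathbb F$; $QU_n=\{QU:U\in U_n\}$; $E_{ij}$ is the matrix unit. A subpermutation is a matrix each of whose rows and columns has at most one nonzero entry, equal to $1$; here $I\subseteq[n]$ and $\sigma:I\to[n]$ is injective with $i<\sigma(i)$. For a matrix $X=[x_{ij}]$, $G_X$ is the directed graph on $[n]$ with arc set $E_X=\{(i,j):x_{ij}\neq0\}$. The connected components of $G_Q$ are directed paths $i_1\to\cdots\to i_p$ with $i_1<\cdots<i_p$, called chains. Notation: $i^+:=\sigma(i)$ for $i\in I$, $j^-:=\sigma^{-1}(j)$ for $j\in\sigma(I)$; $S_h=[n]\setminus I$ (chain heads) and $S_t=[n]\setminus\sigma(I)$ (chain tails). Belitskii order on positions $\{(i,j):1\le i<j\le n\}$: $(i,j)\prec(i',j')$ iff $i>i'$, or $i=i'$ and $j<j'$. Belitskii's algorithm for $B_n$-similarity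 on $N_n$: given $A\in N_n$ put $A^{(0)}=A$, $G^{(0)}=B_n$. For $k=0,1,\dots$, let $(p,q)$ be the $(k+1)$th position in Belitskii order and look at the $(p,q)$ entries of all matrices $G^{(k)}$-similar to $A^{(k)}$: (a) if this entry is always $0$ or can take every value of $\mathbb F$, choose $A^{(k+1)}$ $G^{(k)}$-similar to $A^{(k)}$ with that entry $0$; (b) if it takes exactly the values of $\mathbb F\setminus\{0\}$, choose $A^{(k+1)}$ with that entry $1$; (c) otherwise it is a constant $\lambda\ne0$ and $A^{(k+1)}=A^{(k)}$. $G^{(k+1)}$ is the subgroup of $g\in G^{(k)}$ such that $gA^{(k+1)}g^{-1}$ agrees with $A^{(k+1)}$ in the first $k+1$ positions. The final matrix is the Belitskii canonical form of $A$; a matrix is a Belitskii canonical form if it is the Belitskii canonical form of some matrix. *)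

From HB Require Import structures.
From mathcomp Require Import all_boot all_order all_algebra.
Set Implicit Arguments. Unset Strict Implicit. Unset Printing Implicit Defensive.
Import GRing.Theory.
Local Open Scope ring_scope.

(* Indices are 0-based: 'I_n stands for [n] = {1,...,n}. *)

Section Defs.
Variables (F : fieldType) (n : nat).

Definition upper_tri (g : 'M[F]_n) : Prop := forall i j : 'I_n, (j < i)%N -> g i j = 0.
Definition in_Bn (g : 'M[F]_n) : Prop := upper_tri g /\ g \in unitmx.
Definition in_Un (U : 'M[F]_n) : Prop := upper_tri U /\ forall i, U i i = 1.
Definition in_Nn (A : 'M[F]_n) : Prop := forall i j : 'I_n, (j <= i)%N -> A i j = 0.

Definition subperm_mx (I : {set 'I_n}) (sigma : 'I_n -> 'I_n) : 'M[F]_n :=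
  \matrix_(i, j) (if (i \in I) && (sigma i == j) then 1 else 0).

Definition in_QUn (Q A : 'M[F]_n) : Prop := exists U, in_Un U /\ A = Q *m U.

Definition conjm (g A : 'M[F]_n) : 'M[F]_n := g *m A *m invmx g.

Definition is_pos (p : 'I_n * 'I_n) : bool := (p.1 < p.2)%N.
Definition bel_lt (p q : 'I_n * 'I_n) : bool :=
  (q.1 < p.1)%N || ((p.1 == q.1) && (p.2 < q.2)%N).
(* number of positions preceding p: p is the (rank p + 1)-th position *)
Definition bel_rank (p : 'I_n * 'I_n) : nat :=
  #|[set q : 'I_n * 'I_n | is_pos q && bel_lt q p]|.
Definition num_pos : nat := #|[set q : 'I_n * 'I_n | is_pos q]|.

Definition agree_upto (k : nat) (X Y : 'M[F]_n) : Prop :=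
  forall p, is_pos p -> (bel_rank p < k)%N -> X p.1 p.2 = Y p.1 p.2.

Fixpoint belG (As : nat -> 'M[F]_n) (k : nat) : 'M[F]_n -> Prop :=
  match k with
  | 0 => in_Bn
  | k'.+1 => fun g => belG As k' g /\ agree_upto k (conjm g (As k)) (As k)
  end.

Definition bel_step (As : nat -> 'M[F]_n) (k : nat) (p : 'I_n * 'I_n) : Prop :=
  let V := fun x : F => exists g, belG As k g /\ conjm g (As k) p.1 p.2 = x in
  (((forall x, V x -> x = 0) \/ (forall x, V x)) /\
     exists g, belG As k g /\ As k.+1 = conjm g (As k) /\ As k.+1 p.1 p.2 = 0)
  \/ ((forall x, V x <-> x != 0) /\
     exists g, belG As k g /\ As k.+1 = conjm g (As k) /\ As k.+1 p.1 p.2 = 1)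
  \/ ((exists l : F, l != 0 /\ forall x, V x <-> x = l) /\ As k.+1 = As k).

Definition bel_cf_of (A0 C : 'M[F]_n) : Prop :=
  exists As : nat -> 'M[F]_n,
    As 0%N = A0 /\
    (forall k p, (k < num_pos)%N -> is_pos p -> bel_rank p = k -> bel_step As k p) /\
    As num_pos = C.

Definition is_bel_cf (C : 'M[F]_n) : Prop := exists A0, in_Nn A0 /\ bel_cf_of A0 C.

Definition Qarc (I : {set 'I_n}) (sigma : 'I_n -> 'I_n) : rel 'I_n :=
  fun x y => (x \in I) && (sigma x == y).
Definition same_chain (I : {set 'I_n}) (sigma : 'I_n -> 'I_n) (x y : 'I_n) : bool :=
  connect (fun a b => Qarc I sigma a b || Qarc I sigma b a) x y.

End Defs.

From HB Require Import structures.
From mathcomp Require Import all_boot all_order all_algebra.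
From mathcomp Require Import zify.
Set Implicit Arguments. Unset Strict Implicit. Unset Printing Implicit Defensive.
Import GRing.Theory.
Local Open Scope ring_scope.

(* A Belitskii canonical form C cannot be improved at any position: if some g in B_n
   makes g C g^-1 agree with C at all positions preceding (i, j) and vanish at (i, j),
   then when the algorithm reaches (i, j) the value 0 is attainable, which excludes
   cases (b) and (c), so C_ij = 0.  For A = QU in QU_n and each of the situations (1)
   and (2) such a g is an explicit elementary matrix 1 + X with X^2 = 0.  Inside a
   chain, an element j beyond i^+ has j^- > i, and an element j <= i gives a_ij = 0
   because A is strictly upper triangular. *)

Section BelitskiiOrder.
Variable n : nat.
Implicit Types p q r : 'I_n * 'I_n.

Lemma bel_ltE p q :
  bel_lt p q = (val q.1 < val p.1)%N || ((val p.1 == val q.1) && (val p.2 < val q.2)%N).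
Proof. by []. Qed.

Lemma bel_lt_trans p q r : bel_lt p q -> bel_lt q r -> bel_lt p r.
Proof. rewrite !bel_ltE; lia. Qed.

Lemma bel_ltxx p : bel_lt p p = false.
Proof. by rewrite bel_ltE !ltnn andbF. Qed.

Lemma bel_lt_total p q : p != q -> bel_lt p q || bel_lt q p.
Proof. case: p q => [a b] [c d]; rewrite xpair_eqE !bel_ltE -!val_eqE /=; lia. Qed.

Lemma bel_rank_le p q : (q == p) || bel_lt q p -> (bel_rank q <= bel_rank p)%N.
Proof.
move=> qp; apply/subset_leq_card/subsetP => r; rewrite !inE => /andP[-> rq] /=.
by case/orP: qp => [/eqP <- // | qp]; apply: bel_lt_trans qp.
Qed.

Lemma bel_rank_lt p q : is_pos q -> bel_lt q p -> (bel_rank q < bel_rank p)%N.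
Proof.
move=> qpos qp; rewrite /bel_rank [X in (_ < X)%N](cardsD1 q) inE qpos qp ltnS.
apply/subset_leq_card/subsetP => r; rewrite !inE => /andP[-> rq].
by rewrite (bel_lt_trans rq qp) !andbT; apply/eqP => rE; rewrite rE bel_ltxx in rq.
Qed.

Lemma bel_lt_of_rank p q :
  is_pos p -> is_pos q -> (bel_rank q < bel_rank p)%N -> bel_lt q p.
Proof.
move=> ppos qpos qp; have /bel_lt_total/orP[] // : q != p.
  by apply: contraTneq qp => ->; rewrite ltnn.
by move/(bel_rank_lt ppos); rewrite ltnNge ltnW.
Qed.

Lemma bel_rank_lt_num_pos p : is_pos p -> (bel_rank p < num_pos n)%N.
Proof.
move=> ppos; rewrite /num_pos [X in (_ < X)%N](cardsD1 p) inE ppos ltnS.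
apply/subset_leq_card/subsetP => r; rewrite !inE => /andP[-> rp].
by rewrite !andbT; apply/eqP => rE; rewrite rE bel_ltxx in rp.
Qed.

Lemma bel_rank_onto k :
  (k < num_pos n)%N -> exists2 p : 'I_n * 'I_n, is_pos p & bel_rank p = k.
Proof.
move=> kN; set P := [set q : 'I_n * 'I_n | is_pos q].
set ranks := [seq bel_rank q | q <- enum P].
have ranks_uniq : uniq ranks.
  rewrite map_inj_in_uniq ?enum_uniq // => p q; rewrite !mem_enum !inE => ppos qpos pq.
  apply: contraTeq isT => /bel_lt_total/orP[] /bel_rank_lt.
    by move/(_ ppos); rewrite pq ltnn.
  by move/(_ qpos); rewrite pq ltnn.
have ranks_sub : {subset ranks <= iota 0 (num_pos n)}.
  move=> r /mapP[q]; rewrite mem_enum inE => qpos ->.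
  by rewrite mem_iota bel_rank_lt_num_pos.
have ranks_size : (size (iota 0 (num_pos n)) <= size ranks)%N.
  by rewrite size_iota size_map -cardE.
have /mapP[q] : k \in ranks.
  by rewrite (uniq_min_size ranks_uniq ranks_sub ranks_size).2 mem_iota.
by rewrite mem_enum inE => qpos ->; exists q.
Qed.

End BelitskiiOrder.

Section UpperTriangular.
Variables (F : fieldType) (n : nat).
Implicit Types g h U X Y : 'M[F]_n.

Lemma upper_triM g h : upper_tri g -> upper_tri h -> upper_tri (g *m h).
Proof.
move=> ug uh a b ba; rewrite mxE big1 // => x _.
have [xa | ax] := ltnP x a; first by rewrite ug ?mul0r.
by rewrite uh ?mulr0 //; apply: leq_trans ba ax.
Qed.

Lemma in_NnMl g X : upper_tri g -> in_Nn X -> in_Nn (g *m X).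
Proof.
move=> ug NX a b ba; rewrite mxE big1 // => x _.
have [xa | ax] := ltnP x a; first by rewrite ug ?mul0r.
by rewrite NX ?mulr0 //; apply: leq_trans ba ax.
Qed.

Lemma in_NnMr g X : upper_tri g -> in_Nn X -> in_Nn (X *m g).
Proof.
move=> ug NX a b ba; rewrite mxE big1 // => x _.
have [ax | xa] := ltnP a x; last by rewrite NX ?mul0r.
by rewrite ug ?mulr0 //; apply: leq_ltn_trans ba ax.
Qed.

Lemma det_upper_tri g : upper_tri g -> \det g = \prod_i g i i.
Proof.
move=> ug; rewrite -det_tr det_trig; last by apply/is_trig_mxP => a b ab; rewrite mxE ug.
by apply: eq_bigr => a _; rewrite mxE.
Qed.

Lemma in_Bn_diag_neq0 g a : in_Bn g -> g a a != 0.
Proof.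
case=> ug; rewrite unitmxE unitfE det_upper_tri // (bigD1 a) //= mulf_eq0 negb_or.
by case/andP.
Qed.

Lemma upper_triV g : in_Bn g -> upper_tri (invmx g).
Proof.
move=> Bg; have [ug Ug] := Bg.
(* Induction on the column: entry (a, b) of invmx g *m g = 1 is
   invmx g a b * g b b plus multiples of invmx g a x with x < b. *)
suff lower0 k (a b : 'I_n) : val b = k -> (b < a)%N -> invmx g a b = 0.
  by move=> a b; apply: lower0.
elim/ltn_ind: k a b => k IH a b bk ba.
have := congr1 (fun M : 'M[F]_n => M a b) (mulVmx Ug); rewrite /= !mxE.
rewrite (bigD1 b) //= big1 ?addr0 => [|x xb]; last first.
  have [xb' | bx] := ltnP x b; first by rewrite (IH x) ?mul0r -?bk // (ltn_trans xb').
  by rewrite ug ?mulr0 // ltn_neqAle bx andbT val_eqE eq_sym.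
rewrite -val_eqE gtn_eqF // => /eqP.
by rewrite mulf_eq0 (negPf (in_Bn_diag_neq0 b Bg)) orbF => /eqP.
Qed.

Lemma in_Un_Bn U : in_Un U -> in_Bn U.
Proof.
case=> uU dU; split=> //.
by rewrite unitmxE det_upper_tri // big1 ?unitr1 // => a _; rewrite dU.
Qed.

Lemma in_Un_1addN X : in_Nn X -> in_Un (1%:M + X).
Proof.
move=> NX; split=> [a b ba | a]; rewrite !mxE.
  by rewrite (NX a b (ltnW ba)) -val_eqE gtn_eqF // addr0.
by rewrite NX // eqxx addr0.
Qed.

Lemma in_Bn1 : in_Bn (1%:M : 'M[F]_n).
Proof.
have /in_Un_1addN : in_Nn (0 : 'M[F]_n) by move=> a b _; rewrite mxE.
by rewrite addr0; apply: in_Un_Bn.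
Qed.

Lemma in_BnM g h : in_Bn g -> in_Bn h -> in_Bn (g *m h).
Proof. by case=> ug Ug [uh Uh]; split; [apply: upper_triM | rewrite unitmx_mul Ug]. Qed.

Lemma mulmx1_invmx X Y : X *m Y = 1%:M -> invmx X = Y.
Proof.
move=> XY; have [UX _] := mulmx1_unit XY.
by rewrite -[invmx X]mulmx1 -XY mulmxA mulVmx // mul1mx.
Qed.

Lemma invmxM g h : g \in unitmx -> h \in unitmx -> invmx (g *m h) = invmx h *m invmx g.
Proof.
by move=> Ug Uh; apply: mulmx1_invmx; rewrite -mulmxA (mulmxA h) mulmxV // mul1mx mulmxV.
Qed.

Lemma invmx_unipotent X : X *m X = 0 -> invmx (1%:M + X) = 1%:M - X.
Proof.
move=> XX; apply: mulmx1_invmx.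
by rewrite mulmxBr mulmx1 mulmxDl mul1mx XX addr0 addrK.
Qed.

Lemma conjm1 X : conjm 1%:M X = X.
Proof. by rewrite /conjm invmx1 mulmx1 mul1mx. Qed.

Lemma conjmM g h X :
  g \in unitmx -> h \in unitmx -> conjm (g *m h) X = conjm g (conjm h X).
Proof. by move=> Ug Uh; rewrite /conjm invmxM // !mulmxA. Qed.

Lemma conjm_Nn g X : in_Bn g -> in_Nn X -> in_Nn (conjm g X).
Proof.
move=> Bg NX; apply: in_NnMr (upper_triV Bg) _.
by apply: in_NnMl NX; case: Bg.
Qed.

End UpperTriangular.

Lemma mul_delta_mxE (R : pzRingType) m p q (r : 'I_m) (s : 'I_p) (M : 'M[R]_(p, q))
    a b :
  (delta_mx r s *m M) a b = (a == r)%:R * M s b.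
Proof.
rewrite mxE (bigD1 s) //= big1 ?addr0 => [|x xs]; first by rewrite mxE eqxx andbT.
by rewrite mxE (negPf xs) andbF mul0r.
Qed.

Lemma mulmx_deltaE (R : pzRingType) m p q (r : 'I_p) (s : 'I_q) (M : 'M[R]_(m, p))
    a b :
  (M *m delta_mx r s) a b = M a r * (b == s)%:R.
Proof.
rewrite mxE (bigD1 r) //= big1 ?addr0 => [|x xr]; first by rewrite mxE eqxx.
by rewrite mxE (negPf xr) mulr0.
Qed.

Section Agreement.
Variables (F : fieldType) (n : nat).
Implicit Types g X Y Z : 'M[F]_n.

Lemma agree_upto_sym k X Y : agree_upto k X Y -> agree_upto k Y X.
Proof. by move=> XY p ppos pk; rewrite XY. Qed.

Lemma agree_upto_trans k X Y Z :
  agree_upto k X Y -> agree_upto k Y Z -> agree_upto k X Z.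
Proof. by move=> XY YZ p ppos pk; rewrite XY ?YZ. Qed.

Lemma agree_upto_le k m X Y : (m <= k)%N -> agree_upto k X Y -> agree_upto m X Y.
Proof. by move=> mk XY p ppos pm; apply: XY (leq_trans pm mk). Qed.

(* (g X g^-1)_(a,b) only involves the X_(x,y) with a <= x and y <= b, that is
   (x, y) = (a, b) or (x, y) precedes (a, b). *)
Lemma agree_upto_conjm k g X Y : in_Bn g -> in_Nn X -> in_Nn Y ->
  agree_upto k X Y -> agree_upto k (conjm g X) (conjm g Y).
Proof.
move=> Bg NX NY XY [a b] /= ab abk; rewrite !mxE; apply: eq_bigr => y _; rewrite !mxE.
have [by_ | yb] := ltnP b y; first by rewrite (upper_triV Bg) ?mulr0.
congr (_ * _); apply: eq_bigr => x _.
have [xa | ax] := ltnP x a; first by rewrite (proj1 Bg a x) ?mul0r.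
have [yx | xy] := leqP y x; first by rewrite NX // NY.
congr (_ * _); apply: (XY (x, y)) => //; apply: leq_ltn_trans abk; apply: bel_rank_le.
rewrite bel_ltE xpair_eqE -!val_eqE /=; lia.
Qed.

End Agreement.

Section BelitskiiRun.
Variables (F : fieldType) (n : nat) (As : nat -> 'M[F]_n).
Hypothesis As0_Nn : in_Nn (As 0).
Hypothesis As_step : forall k p, (k < num_pos n)%N -> is_pos p -> bel_rank p = k ->
  bel_step As k p.
Local Notation N := (num_pos n).
Implicit Types g h : 'M[F]_n.

Lemma belG_Bn k g : belG As k g -> in_Bn g.
Proof. by elim: k => //= k IH [/IH]. Qed.

Lemma belG_agree k g : belG As k g -> agree_upto k (conjm g (As k)) (As k).
Proof. by case: k => [_ p _|k []] //; rewrite ltn0. Qed.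

Lemma belG1 k : belG As k 1%:M.
Proof. by elim: k => [|k IH] /=; [apply: in_Bn1 | rewrite conjm1]. Qed.

Lemma bel_run_step k : (k < N)%N -> exists2 h, belG As k h & As k.+1 = conjm h (As k).
Proof.
move=> kN; have [p ppos pk] := bel_rank_onto kN.
case: (As_step kN ppos pk) => [[_ [h [? [? _]]]] | [[_ [h [? [? _]]]] | [_ ->]]].
- by exists h.
- by exists h.
- by exists 1%:M; [apply: belG1 | rewrite conjm1].
Qed.

Lemma bel_run_Nn k : (k <= N)%N -> in_Nn (As k).
Proof.
elim: k => // k IH kN; have [h /belG_Bn Bh ->] := bel_run_step kN.
by apply: conjm_Nn Bh (IH (ltnW kN)).
Qed.

Lemma belG_of_agree k g : (k <= N)%N -> in_Bn g ->
  agree_upto k (conjm g (As k)) (As k) -> belG As k g.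
Proof.
elim: k g => [//|k IH] g kN Bg g_agree /=; split=> //.
have [h h_belG AsS] := bel_run_step kN.
have AsS_agree : agree_upto k (As k.+1) (As k) by rewrite AsS; apply: belG_agree.
apply: IH => //; first exact: ltnW.
have conj_agree := agree_upto_conjm Bg (bel_run_Nn (ltnW kN)) (bel_run_Nn kN)
  (agree_upto_sym AsS_agree).
apply: agree_upto_trans conj_agree _; apply: agree_upto_trans AsS_agree.
exact: agree_upto_le g_agree.
Qed.

Lemma bel_run_agree k m : (k <= m <= N)%N -> agree_upto k (As m) (As k).
Proof.
elim: m => [|m IH] /andP[km mN]; first by move: km; rewrite leqn0 => /eqP ->.
have [<- // | kSm] := eqVneq k m.+1.
have km' : (k <= m)%N by rewrite -ltnS ltn_neqAle kSm km.
have [h h_belG ->] := bel_run_step mN.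
apply: agree_upto_trans (IH _); last by rewrite km' ltnW.
exact: agree_upto_le km' (belG_agree h_belG).
Qed.

Lemma bel_run_conj k m : (k <= m <= N)%N -> exists2 h, in_Bn h & As m = conjm h (As k).
Proof.
elim: m => [|m IH] /andP[km mN].
  by move: km; rewrite leqn0 => /eqP ->; exists 1%:M; [apply: in_Bn1 | rewrite conjm1].
have [<- | kSm] := eqVneq k m.+1; first by exists 1%:M; [apply: in_Bn1 | rewrite conjm1].
have km' : (k <= m)%N by rewrite -ltnS ltn_neqAle kSm km.
have [h /belG_Bn Bh ->] := bel_run_step mN.
have [H BH ->] : exists2 H, in_Bn H & As m = conjm H (As k)
  by apply: IH; rewrite km' ltnW.
exists (h *m H); first exact: in_BnM.
by rewrite conjmM //; [case: Bh | case: BH].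
Qed.

Lemma bel_run_entry_eq0 p g : is_pos p -> in_Bn g ->
  agree_upto (bel_rank p) (conjm g (As N)) (As N) ->
  conjm g (As N) p.1 p.2 = 0 -> As N p.1 p.2 = 0.
Proof.
move=> ppos Bg g_agree gp0; set k := bel_rank p.
have kN : (k < N)%N := bel_rank_lt_num_pos ppos.
have k_le_N : (k <= N <= N)%N by rewrite leqnn andbT ltnW.
have [H BH AsN] := bel_run_conj k_le_N.
have gH_conj : conjm (g *m H) (As k) = conjm g (As N).
  by rewrite conjmM -?AsN //; [case: Bg | case: BH].
have zero_attained : exists g', belG As k g' /\ conjm g' (As k) p.1 p.2 = 0.
  exists (g *m H); rewrite gH_conj; split=> //.
  apply: belG_of_agree (ltnW kN) (in_BnM Bg BH) _; rewrite gH_conj.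
  exact: agree_upto_trans g_agree (bel_run_agree k_le_N).
have AsN_agree : agree_upto k.+1 (As N) (As k.+1).
  by apply: bel_run_agree; rewrite kN leqnn.
case: (As_step kN ppos erefl) =>
  [[_ [_ [_ [_ AsS0]]]] | [[attained _] | [[l [l0 attained]] _]]].
- by rewrite (AsN_agree p ppos (ltnSn k)).
- by have := (attained 0).1 zero_attained; rewrite eqxx.
- by have := (attained 0).1 zero_attained => l0E; rewrite -l0E eqxx in l0.
Qed.

End BelitskiiRun.

Definition clears_entry (F : fieldType) (n : nat) (A g : 'M[F]_n) (i j : 'I_n) : Prop :=
  [/\ in_Bn g, forall a b : 'I_n, bel_lt (a, b) (i, j) -> conjm g A a b = A a b
    & conjm g A i j = 0].

Lemma is_bel_cf_entry_eq0 (F : fieldType) (n : nat) (C g : 'M[F]_n) (i j : 'I_n) :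
  is_bel_cf C -> (i < j)%N -> clears_entry C g i j -> C i j = 0.
Proof.
case=> A0 [A0_Nn [As [As0 [As_step <-]]]] ij [Bg g_earlier gij]; subst A0.
apply: (bel_run_entry_eq0 A0_Nn As_step (p := (i, j)) ij Bg _ gij) => -[a b] ab.
by move/(@bel_lt_of_rank _ (i, j) (a, b) ij ab)/g_earlier.
Qed.

Section SubpermTimesUnitriangular.
Variables (F : fieldType) (n : nat) (I : {set 'I_n}) (sigma : 'I_n -> 'I_n).
Hypothesis sigma_inj : {in I &, injective sigma}.
Hypothesis sigma_incr : forall i, i \in I -> (i < sigma i)%N.
Variable U : 'M[F]_n.
Hypothesis U_Un : in_Un U.
Local Notation Q := (subperm_mx F I sigma).
Local Notation A := (Q *m U).
Implicit Types a b i j : 'I_n.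

Lemma QU_entry a b : A a b = if a \in I then U (sigma a) b else 0.
Proof.
rewrite mxE; case: ifPn => aI.
  rewrite (bigD1 (sigma a)) //= big1 ?addr0 => [|x xa]; first by rewrite mxE aI eqxx mul1r.
  by rewrite mxE aI eq_sym (negPf xa) mul0r.
by rewrite big1 // => x _; rewrite mxE (negPf aI) mul0r.
Qed.

Lemma QU_eq0_lt_sigma a b : (b < sigma a)%N -> A a b = 0.
Proof. by move=> ba; rewrite QU_entry; case: ifP => // _; rewrite U_Un.1. Qed.

Lemma QU_sigma a : a \in I -> A a (sigma a) = 1.
Proof. by move=> aI; rewrite QU_entry aI U_Un.2. Qed.

Lemma QU_Nn : in_Nn A.
Proof.
move=> a b ba; rewrite QU_entry; case: ifP => // aI.
by rewrite U_Un.1 // (leq_ltn_trans ba (sigma_incr aI)).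
Qed.

Lemma subperm_mx_mul_delta i j : i \in I -> Q *m delta_mx (sigma i) j = delta_mx i j.
Proof.
move=> iI; apply/matrixP => a b; rewrite mulmx_deltaE !mxE.
have [-> | ai] := eqVneq a i; first by rewrite iI eqxx mul1r.
case: (boolP (a \in I)) => aI /=; last by rewrite mul0r.
have [sa_si | _] := eqVneq (sigma a) (sigma i); last by rewrite mul0r.
by rewrite (sigma_inj aI iI sa_si) eqxx in ai.
Qed.

(* Case (1): g = 1 + c U^-1 E_(i^+, j) with c = a_ij.  Row j of A is zero since
   j is a chain head, and A U^-1 E_(i^+, j) = Q E_(i^+, j) = E_ij, so
   g A g^-1 = A - c E_ij. *)
Lemma QU_clears_head i j : i \in I -> (sigma i < j)%N -> j \notin I ->
  exists g, clears_entry A g i j.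
Proof.
move=> iI sij jI; set c := A i j; set X := c *: (invmx U *m delta_mx (sigma i) j).
have V_ut := upper_triV (in_Un_Bn U_Un).
have XE a b : X a b = c * (invmx U a (sigma i) * (b == j)%:R).
  by rewrite mxE mulmx_deltaE.
have X_Nn : in_Nn X.
  move=> a b ba; rewrite XE; have [bj | _] := eqVneq b j; last by rewrite !mulr0.
  by rewrite V_ut ?mul0r ?mulr0 // (leq_trans sij) // -bj.
have XX : X *m X = 0.
  apply/matrixP => a b; rewrite !mxE big1 // => y _; rewrite !XE.
  have [-> | _] := eqVneq y j; last by rewrite !mulr0 mul0r.
  by rewrite (V_ut _ _ sij) mul0r !mulr0.
have EA : delta_mx (sigma i) j *m A = 0.
  by apply/matrixP => a b; rewrite mul_delta_mxE QU_entry (negPf jI) mulr0 mxE.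
have XA : X *m A = 0 by rewrite -scalemxAl -mulmxA EA mulmx0 scaler0.
have AX : A *m X = c *: delta_mx i j.
  rewrite -scalemxAr mulmxA -(mulmxA Q) mulmxV ?mulmx1 ?subperm_mx_mul_delta //.
  by case: (in_Un_Bn U_Un).
have g_conj : conjm (1%:M + X) A = A - c *: delta_mx i j.
  by rewrite /conjm invmx_unipotent // mulmxDl mul1mx XA addr0 mulmxBr mulmx1 AX.
have g_conjE a b : conjm (1%:M + X) A a b = A a b - c * ((a, b) == (i, j))%:R.
  by rewrite g_conj !mxE.
exists (1%:M + X); split.
- exact/in_Un_Bn/in_Un_1addN.
- move=> a b ab; rewrite g_conjE.
  by case: eqP ab => [-> | _ _]; [rewrite bel_ltxx | rewrite mulr0 subr0].
- by rewrite g_conjE eqxx mulr1 subrr.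
Qed.

(* Case (2): g = 1 - c E_(i, i') with c = a_(i, sigma i').  Left multiplication
   subtracts c times row i', whose leading entry is a_(i', sigma i') = 1, from
   row i; right multiplication by g^-1 = 1 + c E_(i, i') adds column i to
   column i', and column i vanishes in the rows a >= i. *)
Lemma QU_clears_tail i i' : i' \in I -> (i < i')%N ->
  exists g, clears_entry A g i (sigma i').
Proof.
move=> i'I ii'; set c := A i (sigma i'); set X := - c *: delta_mx i i'.
have X_Nn : in_Nn X.
  move=> a b ba; rewrite !mxE; case: eqP => [ai | _]; case: eqP => [bi' | _] /=;
    rewrite ?mulr0 //.
  by move: ba; rewrite ai bi' leqNgt ii'.
have XX : X *m X = 0.
  by rewrite -scalemxAl -scalemxAr mul_delta_mx_0 ?scaler0 // -val_eqE gtn_eqF.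
set M := A + X *m A.
have ME a b : M a b = A a b - c * ((a == i)%:R * A i' b).
  by rewrite /M -scalemxAl mxE [X in _ + X]mxE mul_delta_mxE mulNr.
have M_col_i a : (i <= a)%N -> M a i = 0.
  by move=> ia; rewrite ME (QU_Nn ia) (QU_Nn (ltnW ii')) !mulr0 subr0.
have g_conj a b : (i <= a)%N -> conjm (1%:M + X) A a b = M a b.
  move=> ia; rewrite /conjm invmx_unipotent // mulmxDl mul1mx -/M mulmxBr mulmx1.
  rewrite -scalemxAr mxE [X in _ + X]mxE [X in - X]mxE mulmx_deltaE M_col_i //.
  by rewrite mul0r mulr0 oppr0 addr0.
exists (1%:M + X); split.
- exact/in_Un_Bn/in_Un_1addN.
- move=> a b; rewrite bel_ltE /= => ab.
  have ia : (i <= a)%N by case/orP: ab => [/ltnW // | /andP[/eqP -> _]].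
  rewrite g_conj // ME; have [ai | _] := eqVneq a i; last by rewrite mul0r mulr0 subr0.
  move: ab; rewrite ai ltnn eqxx /= => bs.
  by rewrite (QU_eq0_lt_sigma bs) !mulr0 subr0.
- by rewrite g_conj // ME eqxx mul1r QU_sigma // mulr1 subrr.
Qed.

End SubpermTimesUnitriangular.

Lemma connect_first (T : finType) (e : rel T) x y :
  connect e x y -> x != y -> exists2 z, e x z & connect e z y.
Proof.
case/connectP => [[|z p]] /= => [_ -> | /andP[xz zp] ->]; first by rewrite eqxx.
by exists z => //; apply/connectP; exists p.
Qed.

Section Chains.
Variables (n : nat) (I : {set 'I_n}) (sigma : 'I_n -> 'I_n).
Hypothesis sigma_inj : {in I &, injective sigma}.
Hypothesis sigma_incr : forall i, i \in I -> (i < sigma i)%N.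
Local Notation arc := (Qarc I sigma).
Implicit Types x y z : 'I_n.

Lemma connect_Qarc_le x y : connect arc x y -> (x <= y)%N.
Proof.
case/connectP => p + ->; elim: p x => //= z p IH x /andP[/andP[xI /eqP xz] /IH].
by apply: leq_trans; rewrite -xz ltnW ?sigma_incr.
Qed.

Lemma connect_Qarc_last x y :
  connect arc x y -> x != y -> exists2 z, connect arc x z & arc z y.
Proof.
move=> xy; rewrite eq_sym; have yx : connect [rel a b | arc b a] y x.
  by rewrite connect_rev.
case/(connect_first yx) => z /= zy zx; exists z => //.
by move: zx; rewrite connect_rev.
Qed.

Lemma same_chain_connect x y :
  same_chain I sigma x y -> connect arc x y || connect arc y x.
Proof.
case/connectP => p + ->; elim: p x => [|z p IH] x /=; first by rewrite connect0.
case/andP=> xz /IH; set w := last z p.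
case/orP: xz => /[dup] /connect1 xz /andP[srcI /eqP arcE] /orP[zw | wz].
- by rewrite (connect_trans xz zw).
- have [-> | wz'] := eqVneq w z; first by rewrite xz.
  have [v wv /andP[vI /eqP sv]] := connect_Qarc_last wz wz'.
  by rewrite -(sigma_inj vI srcI (etrans sv (esym arcE))) wv orbT.
- have [<- | zw'] := eqVneq z w; first by rewrite xz orbT.
  have [v /andP[_ /eqP sv] vw] := connect_first zw zw'.
  by rewrite -arcE sv vw.
- by rewrite (connect_trans wz xz) orbT.
Qed.

Lemma same_chain_cases i j : same_chain I sigma i j ->
  [\/ (j <= i)%N, j = sigma i | exists i', [/\ i' \in I, sigma i' = j & (i < i')%N]].
Proof.
case/same_chain_connect/orP => [ij | /connect_Qarc_le]; last by constructor 1.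
have [<- | ij'] := eqVneq i j; first by constructor 1.
have [z iz /andP[zI /eqP zj]] := connect_Qarc_last ij ij'.
have [iE | iz'] := eqVneq i z; first by constructor 2; rewrite -zj iE.
constructor 3; exists z; split=> //.
by rewrite ltn_neqAle val_eqE iz' connect_Qarc_le.
Qed.

End Chains.

Theorem theorem4p6 (F : fieldType) (n : nat) (I : {set 'I_n}) (sigma : 'I_n -> 'I_n)
  (sigma_inj : {in I &, injective sigma})
  (sigma_incr : forall i, i \in I -> (i < sigma i)%N)
  (A : 'M[F]_n)
  (hA : in_QUn (subperm_mx F I sigma) A)
  (hcf : is_bel_cf A) :
  forall i j : 'I_n, i \in I ->
    (* (1) i^+ < j and j in S_h *)
    ((sigma i < j)%N -> j \notin I -> A i j = 0) /\
    (* (2) j notin S_t (j = sigma i' for some i' in I) and i < j^- *)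
    ((exists i', [/\ i' \in I, sigma i' = j & (i < i')%N]) -> A i j = 0) /\
    (* in particular: same chain and j <> i^+ *)
    (same_chain I sigma i j -> j != sigma i -> A i j = 0).
Proof.
move=> i j iI; case: hA hcf => U [U_Un ->] hcf.
have head_eq0 : (sigma i < j)%N -> j \notin I -> (subperm_mx F I sigma *m U) i j = 0.
  move=> sij jI; have [g g_clears] := QU_clears_head sigma_inj U_Un iI sij jI.
  exact: is_bel_cf_entry_eq0 hcf (ltn_trans (sigma_incr i iI) sij) g_clears.
have tail_eq0 : (exists i', [/\ i' \in I, sigma i' = j & (i < i')%N]) ->
    (subperm_mx F I sigma *m U) i j = 0.
  case=> i' [i'I <- ii']; have [g g_clears] := QU_clears_tail sigma_incr U_Un i'I ii'.
  exact: is_bel_cf_entry_eq0 hcf (ltn_trans ii' (sigma_incr i' i'I)) g_clears.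
split; [exact: head_eq0 | split; first exact: tail_eq0].
case/(same_chain_cases sigma_inj sigma_incr) => [ji _ | -> | /tail_eq0 //].
  by apply: (QU_Nn sigma_incr U_Un).
by rewrite eqxx.
Qed.
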